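(* Let $\boldsymbol{\mathcal{G}}=(\mathcal{V},\boldsymbol{\mathcal{E}},\mu(\cdot))$ be a stochastic digraph with vertex set $\mathbb{Z}_n=\{1,\dots,n\}$, edge sets $\mathcal{E}_1,\dots,\mathcal{E}_h$, and out-neighborhood map $H(x,w)=\{y\in\mathbb{Z}_n:(x,y)\in\mathcal{E}_w\}$, and assume that there is no pair $(i,w)\in\mathbb{Z}_n\times\mathbb{Z}_h$ with $\mu(\{w\})>0$ and $H(i,w)=\emptyset$. Let $\boldsymbol{x}$ be a stochastic directed path of $\boldsymbol{\mathcal{G}}$, i.e., $\boldsymbol{x}\in\mathcal{S}(x)$ for some $x\in\mathbb{Z}_n$. For $i,j\in\mathbb{Z}_n$ define $$\ell_{i,j}:=\sum_{s\in\{w\in\mathbb{Z}_h:\,H(i,w)=\{j\}\}}\mu(\{s\})\in[0,1],\qquad m_{i,j}:=\sum_{s\in\{w\in\mathbb{Z}_h:\,H(i,w)\cap\{j\}\neq\emptyset\}}\mu(\{s\})\in[0,1].$$ Then, for each $i,j\in\mathbb{Z}_n$ (and each time $k$), $$\ell_{i,j}\leqslant \mathbb{P}(\boldsymbol{x}_{k+1}=j\mid \boldsymbol{x}_k=i)\leqslant m_{i,j},$$ i.e., $\ell_{i,j}$ and $m_{i,j}$ are a lower and an upper bound, respectively, on the transition probability from node $i$ to node $j$.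
   Context: A stochastic digraph is a triple $\boldsymbol{\mathcal{G}}=(\mathcal{V},\boldsymbol{\mathcal{E}},\mu(\cdot))$ where $\mathcal{V}=\mathbb{Z}_n$, $\boldsymbol{\mathcal{E}}=\{\mathcal{E}_s\}_{s=1}^h$ ($h<\infty$) with each $\mathcal{E}_s\subset\mathbb{Z}_n\times\mathbb{Z}_n$, and $\mu$ is the common distribution of an i.i.d. sequence of random variables $\boldsymbol{w}_k:\Omega\to\mathbb{Z}_h=\{1,\dots,h\}$, $k\in\mathbb{Z}_{\geqslant0}$, on a probability space $(\Omega,\mathcal{F},\mathbb{P})$: $\mu(F)=\mathbb{P}(\boldsymbol{w}_k\in F)$ for $F\subset\mathbb{Z}_h$. A sequence $\{(\phi_k,w_k)\}_{k=0}^K$ is a regular directed path starting at $x$ if $\phi_0=x$ and $\phi_{k+1}\in H(\phi_k,w_k)$ for $k=0,\dots,K-1$. A stochastic directed path from $x$ is a map $\omega\mapsto\{\boldsymbol{x}_k(\omega)\}_{k=0}^{\boldsymbol{K}(\omega)}$, with $\boldsymbol{K}:\Omega\to\mathbb{Z}_{\geqslant0}\cup\{\infty\}$ a random variable, such that (path-wise feasibility) for each $\omega$, $\{(\boldsymbol{x}_k(\omega),\boldsymbol{w}_k(\omega))\}_{k=0}^{\boldsymbol{K}(\omega)}$ is a regular directed path from $x$, and (causal measurability) for each $k$, $\omega\mapsto\boldsymbol{x}_{k+1}(\omega)$ is $\mathcal{F}_k$-measurable, where $(\mathcal{F}_k)_k$ is the minimal filtration generated by $\boldsymbol{w}$ (i.e.,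 $\mathcal{F}_k=\sigma(\boldsymbol{w}_0,\dots,\boldsymbol{w}_k)$). A stochastic directed path is maximal if it cannot be extended; $\mathcal{S}(x)$ denotes the set of maximal stochastic directed paths from $x$. *)

From HB Require Import structures.
From mathcomp Require Import all_boot all_order all_algebra.
From mathcomp Require Import all_classical all_reals all_analysis.
Set Implicit Arguments. Unset Strict Implicit. Unset Printing Implicit Defensive.
Import Order.TTheory GRing.Theory Num.Theory.
Local Open Scope classical_set_scope.
Local Open Scope ring_scope.

(* Out-neighborhood map H(x,w) = {y | (x,y) \in E_w}.  Vertices 'I_n, labels 'I_h
   (0-indexed versions of Z_n, Z_h). *)
Definition Hnb (n h : nat) (E : 'I_h -> {set 'I_n * 'I_n}) (x : 'I_n) (s : 'I_h)
  : {set 'I_n} := [set y | (x, y) \in E s].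

Definition gen_sets (T : Type) (h : nat) (w : nat -> T -> 'I_h) (k : nat)
  : set (set T) :=
  [set A | exists i, (i <= k)%N /\ exists B : set 'I_h, A = w i @^-1` B].

Definition filtr (T : Type) (h : nat) (w : nat -> T -> 'I_h) (k : nat)
  : set (set T) := <<s gen_sets w k >>.

Definition mutually_independent (R : realType) (d : measure_display)
  (T : measurableType d) (P : probability T R) (h : nat) (w : nat -> T -> 'I_h) :=
  forall (s : seq nat) (B : nat -> set 'I_h), uniq s ->
    P (\big[setI/setT]_(i <- s) (w i @^-1` B i)) =
    (\prod_(i <- s) P (w i @^-1` B i))%E.

(* A stochastic directed path from x0, encoded as x : nat -> T -> option 'I_n,
   where x k om = Some (x_k(om)) if k <= K(om) and None otherwise.
   - x_0 = x0;  - the set of defined times is an initial segment {0..K(om)};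
   - path-wise feasibility: x_{k+1} \in H(x_k, w_k);
   - causal measurability: om |-> x_{k+1}(om) (including whether it is defined,
     i.e. the event {K >= k+1}) is F_k-measurable. *)
Definition stoch_path (T : Type) (n h : nat) (E : 'I_h -> {set 'I_n * 'I_n})
  (w : nat -> T -> 'I_h) (x0 : 'I_n) (x : nat -> T -> option 'I_n) : Prop :=
  [/\ (forall om, x 0%N om = Some x0),
      (forall k om, x k.+1 om <> None -> x k om <> None),
      (forall k om a b, x k om = Some a -> x k.+1 om = Some b ->
         b \in Hnb E a (w k om))
    & (forall k (v : option 'I_n), filtr w k [set om | x k.+1 om = v])].

Definition maximal_stoch_path (T : Type) (n h : nat) (E : 'I_h -> {set 'I_n * 'I_n})
  (w : nat -> T -> 'I_h) (x0 : 'I_n) (x : nat -> T -> option 'I_n) : Prop :=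
  stoch_path E w x0 x /\
  forall y, stoch_path E w x0 y ->
    (forall k om, x k om <> None -> y k om = x k om) -> y = x.

Definition Spaths (T : Type) (n h : nat) (E : 'I_h -> {set 'I_n * 'I_n})
  (w : nat -> T -> 'I_h) (x0 : 'I_n) : set (nat -> T -> option 'I_n) :=
  [set x | maximal_stoch_path E w x0 x].

Definition ell (R : realType) (n h : nat) (E : 'I_h -> {set 'I_n * 'I_n})
  (mu : 'I_h -> R) (i j : 'I_n) : R :=
  \sum_(s : 'I_h | Hnb E i s == [set j]%SET) mu s.

Definition emm (R : realType) (n h : nat) (E : 'I_h -> {set 'I_n * 'I_n})
  (mu : 'I_h -> R) (i j : 'I_n) : R :=
  \sum_(s : 'I_h | j \in Hnb E i s) mu s.

Definition cond_prob (R : realType) (d : measure_display) (T : measurableType d)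
  (P : probability T R) (A B : set T) : R :=
  fine (P (A `&` B)) / fine (P B).

From HB Require Import structures.
From mathcomp Require Import all_boot all_order all_algebra.
From mathcomp Require Import all_classical all_reals all_analysis.
Import Order.TTheory GRing.Theory Num.Theory.
Set Implicit Arguments.
Unset Strict Implicit.
Unset Printing Implicit Defensive.
Local Open Scope classical_set_scope.
Local Open Scope ring_scope.

(* Since x_{k+1} is F_k-measurable, every event {x_k = v} is determined by the
   history (w_0, ..., w_{k-1}) and is therefore independent of w_k.  Given
   x_k = i, feasibility puts x_{k+1} in H(i, w_k), so
   {x_k = i, x_{k+1} = j} is contained in {x_k = i, j \in H(i, w_k)}; conversely
   maximality forces x_{k+1} = j on {x_k = i, H(i, w_k) = {j}}, since otherwise the
   path could be extended to j on that F_k-measurable event.  By independence the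
   two bounding events have probabilities P(x_k = i) m_{ij} and P(x_k = i) l_{ij}. *)

Definition history (T : Type) (h : nat) (w : nat -> T -> 'I_h) (k : nat) (om : T)
  : {ffun 'I_k -> 'I_h} := [ffun i : 'I_k => w i om].

Section filtration.
Variables (T : Type) (h : nat) (w : nat -> T -> 'I_h).

Lemma filtr_preimage_history k (A : set T) :
  filtr w k A -> exists C : set {ffun 'I_k.+1 -> 'I_h}, A = history w k.+1 @^-1` C.
Proof.
move=> wkA.
suff [C _ <-] : preimage_set_system setT (history w k.+1) setT A.
  by exists C; rewrite setTI.
apply: (smallest_sub _ _ wkA); first exact: sigma_algebra_preimage.
move=> _ [i [ik [B ->]]].
exists [set f | B (f (Ordinal (ik : (i < k.+1)%N)))] => //.
by rewrite setTI; apply/seteqP; split=> om; rewrite /= ffunE.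
Qed.

Lemma filtr_preimage k (B : set 'I_h) : filtr w k (w k @^-1` B).
Proof. by apply: sub_gen_smallest; exists k; split => //; exists B. Qed.

Lemma filtr_le k l (A : set T) : (k <= l)%N -> filtr w k A -> filtr w l A.
Proof.
move=> kl; apply: sub_smallest2r; first exact: smallest_sigma_algebra.
by move=> _ [i [ik [B ->]]]; exists i; split; [exact: leq_trans kl|exists B].
Qed.

Lemma filtr_const k (P : Prop) : filtr w k [set _ | P].
Proof.
have [p|np] := pselect P.
  rewrite (_ : [set _ | P] = setT); last by apply/seteqP; split.
  rewrite -(setD0 setT); apply: sigma_algebraCD; exact: sigma_algebra0.
rewrite (_ : [set _ | P] = set0); first exact: sigma_algebra0.
by apply/seteqP; split.
Qed.

End filtration.

Section filtration_pointed.
Variables (T : pointedType) (h : nat) (w : nat -> T -> 'I_h) (k : nat).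

Lemma filtrI (A B : set T) : filtr w k A -> filtr w k B -> filtr w k (A `&` B).
Proof. exact: (@measurableI _ (g_sigma_algebraType (gen_sets w k))). Qed.

Lemma filtrU (A B : set T) : filtr w k A -> filtr w k B -> filtr w k (A `|` B).
Proof. exact: (@measurableU _ (g_sigma_algebraType (gen_sets w k))). Qed.

Lemma filtrC (A : set T) : filtr w k A -> filtr w k (~` A).
Proof. exact: (@measurableC _ (g_sigma_algebraType (gen_sets w k))). Qed.

End filtration_pointed.

Lemma filtr_measurable (d : measure_display) (T : measurableType d) (h : nat)
    (w : nat -> T -> 'I_h) (k : nat) (A : set T) :
  (forall k (B : set 'I_h), measurable (w k @^-1` B)) ->
  filtr w k A -> measurable A.
Proof.
move=> w_meas wkA; apply: (smallest_sub _ _ wkA); first exact: sigma_algebra_measurable.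
by move=> _ [i [_ [B ->]]].
Qed.

Section independence.
Variables (R : realType) (d : measure_display) (T : measurableType d).
Variables (P : probability T R) (h : nat) (w : nat -> T -> 'I_h).
Hypothesis w_meas : forall k (B : set 'I_h), measurable (w k @^-1` B).
Hypothesis w_indep : mutually_independent P w.

Definition history_slot k (f : {ffun 'I_k -> 'I_h}) (B : set 'I_h) (i : nat) : set 'I_h :=
  if insub i is Some j then [set f j] else B.

Lemma history1_preimageE k (f : {ffun 'I_k -> 'I_h}) (B : set 'I_h) :
  history w k @^-1` [set f] `&` w k @^-1` B =
  \big[setI/setT]_(i <- iota 0 k.+1) (w i @^-1` history_slot f B i).
Proof.
rewrite -bigcap_seq; apply/seteqP; split=> om.
- move=> [fE wB] i; rewrite /mkset mem_iota add0n /history_slot -{}fE /=.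
  rewrite ltnS leq_eqVlt => /orP[/eqP ->|ik]; last by rewrite insubT /= ffunE.
  by rewrite insubF ?ltnn.
- move=> wslot; split; last first.
    by have := wslot k; rewrite /mkset mem_iota ltnSn /history_slot insubF ?ltnn //; apply.
  apply/ffunP => j; rewrite ffunE.
  have := wslot j; rewrite /mkset mem_iota ltnS (ltnW (ltn_ord j)) /history_slot.
  by rewrite valK; apply.
Qed.

Lemma history1_indep k (f : {ffun 'I_k -> 'I_h}) (B : set 'I_h) :
  P (history w k @^-1` [set f] `&` w k @^-1` B) =
  (P (history w k @^-1` [set f]) * P (w k @^-1` B))%E.
Proof.
have splitE B' : P (history w k @^-1` [set f] `&` w k @^-1` B') =
    ((\prod_(0 <= i < k) P (w i @^-1` history_slot f setT i)) * P (w k @^-1` B'))%E.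
  rewrite history1_preimageE w_indep ?iota_uniq // -/(index_iota 0 k.+1).
  rewrite big_nat_recr //= {2}/history_slot insubF ?ltnn //; congr (_ * _)%E.
  by apply: eq_big_nat => i /andP[_ ik]; rewrite /history_slot insubT.
have := splitE setT; rewrite preimage_setT setIT probability_setT mule1 => ->.
exact: splitE.
Qed.

Lemma history_indep k (C : set {ffun 'I_k -> 'I_h}) (B : set 'I_h) :
  P (history w k @^-1` C `&` w k @^-1` B) =
  (P (history w k @^-1` C) * P (w k @^-1` B))%E.
Proof.
have sumE B' : P (history w k @^-1` C `&` w k @^-1` B') =
    (\sum_(f \in C) P (history w k @^-1` [set f]) * P (w k @^-1` B'))%E.
  have -> : history w k @^-1` C `&` w k @^-1` B' =
      \bigcup_(f in C) (history w k @^-1` [set f] `&` w k @^-1` B').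
    apply/seteqP; split=> om; first by move=> [/= Cf wB]; exists (history w k om).
    by move=> [f Cf [/= fE wB]]; split; rewrite //= fE.
  rewrite measure_fin_bigcup //.
  - by apply: eq_fsbigr => f _; exact: history1_indep.
  - exact: finite_finset.
  - by move=> f g _ _ [om [[/= <- _] [/= <- _]]].
  - move=> f _; rewrite history1_preimageE.
    by apply: bigsetI_measurable => i _; exact: w_meas.
rewrite sumE -[history w k @^-1` C]setIT -(preimage_setT (w k)) sumE.
rewrite preimage_setT probability_setT !fsbig_finite; try exact: finite_finset.
by rewrite -!ge0_sume_distrl ?mule1 // => f _; exact: measure_ge0.
Qed.

End independence.

Lemma measure_preimage_pred (R : realType) (d : measure_display) (T : measurableType d)
    (P : probability T R) (h : nat) (mu : 'I_h -> R) (X : T -> 'I_h) (p : pred 'I_h) :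
  (forall B : set 'I_h, measurable (X @^-1` B)) ->
  (forall s, P (X @^-1` [set s]) = (mu s)%:E) ->
  P (X @^-1` [set s | p s]) = (\sum_(s | p s) mu s)%:E.
Proof.
move=> X_meas X_dist.
have -> : X @^-1` [set s | p s] = \big[setU/set0]_(s | p s) X @^-1` [set s].
  rewrite -bigcup_pred; apply/seteqP; split=> om /=; first by exists (X om).
  by move=> [s ps /= ->].
rewrite measure_bigsetU_ord //; last by move=> s t _ _ [om [/= <- <-]].
by rewrite -sumEFin; apply: eq_bigr => s _; exact: X_dist.
Qed.

Lemma le_cond_prob (R : realType) (d : measure_display) (T : measurableType d)
    (P : probability T R) (A B : set T) (c : R) :
  measurable A -> measurable B -> (0 < P B)%E ->
  (P B * c%:E <= P (A `&` B))%E -> c <= cond_prob P A B.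
Proof.
move=> mA mB PB_gt0 le_cAB; rewrite /cond_prob.
have fB := fin_num_measure P B mB.
have fAB := fin_num_measure P _ (measurableI _ _ mA mB).
have fPB_gt0 : 0 < fine (P B) by rewrite -lte_fin fineK.
by rewrite ler_pdivlMr // mulrC -lee_fin EFinM !fineK.
Qed.

Lemma cond_prob_le (R : realType) (d : measure_display) (T : measurableType d)
    (P : probability T R) (A B : set T) (c : R) :
  measurable A -> measurable B -> (0 < P B)%E ->
  (P (A `&` B) <= P B * c%:E)%E -> cond_prob P A B <= c.
Proof.
move=> mA mB PB_gt0 le_ABc; rewrite /cond_prob.
have fB := fin_num_measure P B mB.
have fAB := fin_num_measure P _ (measurableI _ _ mA mB).
have fPB_gt0 : 0 < fine (P B) by rewrite -lte_fin fineK.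
by rewrite ler_pdivrMr // mulrC -lee_fin EFinM !fineK.
Qed.

Section stochastic_path.
Variables (T : pointedType) (n h : nat) (E : 'I_h -> {set 'I_n * 'I_n}).
Variables (w : nat -> T -> 'I_h) (x0 : 'I_n).

Lemma stoch_path_filtr x k (v : option 'I_n) :
  stoch_path E w x0 x -> filtr w k [set om | x k om = v].
Proof.
case=> x_0 _ _ x_adapted; case: k => [|k]; last exact: filtr_le (x_adapted k v).
rewrite (_ : [set om | _] = [set _ | Some x0 = v]); first exact: filtr_const.
by apply/seteqP; split=> om; rewrite /= x_0.
Qed.

Lemma stoch_path_history x k (v : option 'I_n) :
  stoch_path E w x0 x ->
  exists C : set {ffun 'I_k -> 'I_h}, [set om | x k om = v] = history w k @^-1` C.
Proof.
case=> x_0 _ _ x_adapted; case: k => [|k]; first exists [set _ | Some x0 = v].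
  by apply/seteqP; split=> om; rewrite /= x_0.
exact: filtr_preimage_history (x_adapted k v).
Qed.

Definition extend_path (x : nat -> T -> option 'I_n) k (S : set T) (j : 'I_n) :=
  fun m om => if (m == k.+1) && `[< S om >] then Some j else x m om.

Lemma stoch_path_extend x k (S : set T) (j : 'I_n) :
  stoch_path E w x0 x -> filtr w k S ->
  (forall om, S om ->
     x k.+1 om = None /\ exists2 a, x k om = Some a & j \in Hnb E a (w k om)) ->
  stoch_path E w x0 (extend_path x k S j).
Proof.
move=> [x_0 x_prefix x_feasible x_adapted] wS S_stuck; rewrite /extend_path.
have Sxk om : S om -> x k.+2 om = None.
  case/S_stuck => xk1 _; case e: (x k.+2 om) => [a|] //; exfalso.
  by apply: (x_prefix k.+1 om) xk1; rewrite e.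
split.
- by move=> om; rewrite x_0.
- move=> m om; case: ifP => [/andP[/eqP[->] /asboolP /S_stuck[_ [a xa _]]]|_].
    by rewrite ltn_eqF //= xa.
  by case: ifP => // _; exact: x_prefix.
- move=> m om a b; have [->|mk] := eqVneq m k.
    rewrite ltn_eqF //= eqxx; case: asboolP => [/S_stuck[_ [a' -> ja']] [<-] [<-] //|_].
    exact: x_feasible.
  rewrite eqSS (negbTE mk) /=.
  case: ifP => [/andP[/eqP -> /asboolP /Sxk ->] //|_]; exact: x_feasible.
- move=> m v; have [->|mk] := eqVneq m k; last first.
    rewrite (_ : [set om | _] = [set om | x m.+1 om = v]); first exact: x_adapted.
    by apply/seteqP; split=> om; rewrite /= eqSS (negbTE mk).
  rewrite (_ : [set om | _] =
      (S `&` [set _ | Some j = v]) `|` (~` S `&` [set om | x k.+1 om = v])).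
    apply: filtrU; apply: filtrI;
      [exact: wS|exact: filtr_const|exact: filtrC|exact: x_adapted].
  apply/seteqP; split=> om; rewrite /= eqxx /=.
    by case: (boolP `[< S om >]) => /asboolP; [left|right].
  by case=> [[S_om <-]|[nS_om <-]]; [rewrite asboolT|rewrite asboolF].
Qed.

Lemma maximal_path_forced_step x k (i j : 'I_n) om :
  maximal_stoch_path E w x0 x ->
  x k om = Some i -> Hnb E i (w k om) = [set j]%SET -> x k.+1 om = Some j.
Proof.
case=> x_path x_max xi Hij; case: (x_path) => _ _ x_feasible x_adapted.
case xk1: (x k.+1 om) => [b|].
  by move: (x_feasible _ _ _ _ xi xk1); rewrite Hij inE => /eqP ->.
(* Otherwise [x] could be extended to [j] on this F_k-measurable event. *)
pose S := [set om' | [/\ x k om' = Some i, Hnb E i (w k om') = [set j]%SET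
                      & x k.+1 om' = None]].
have wS : filtr w k S.
  rewrite (_ : S = [set om' | x k om' = Some i] `&`
      w k @^-1` [set s | Hnb E i s = [set j]%SET] `&` [set om' | x k.+1 om' = None]).
    apply: filtrI; [apply: filtrI|exact: x_adapted].
      exact: stoch_path_filtr x_path.
    exact: filtr_preimage.
  by apply/seteqP; split=> om' /=; [case|case=> -[]].
have S_stuck om' : S om' ->
    x k.+1 om' = None /\ exists2 a, x k om' = Some a & j \in Hnb E a (w k om').
  by case=> xi' Hij' xN; split=> //; exists i; rewrite // Hij' inE.
have /(congr1 (fun y => y k.+1 om)) : extend_path x k S j = x.
  apply: x_max; first exact: stoch_path_extend.
  move=> m om' xm; rewrite /extend_path; case: ifP => // /andP[/eqP mk /asboolP [_ _ xN]].
  by rewrite mk xN in xm.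
by rewrite /extend_path eqxx asboolT // xk1.
Qed.

End stochastic_path.

Theorem theorem1 (R : realType) (d : measure_display) (T : measurableType d)
  (P : probability T R) (n h : nat) (E : 'I_h -> {set 'I_n * 'I_n})
  (mu : 'I_h -> R) (w : nat -> T -> 'I_h)
  (w_meas : forall k (B : set 'I_h), measurable (w k @^-1` B))
  (w_dist : forall k (s : 'I_h), P (w k @^-1` [set s]) = (mu s)%:E)
  (w_indep : mutually_independent P w)
  (no_dead : ~ (exists (i : 'I_n) (s : 'I_h), 0 < mu s /\ Hnb E i s = finset.set0))
  (x0 : 'I_n) (x : nat -> T -> option 'I_n) (hx : x \in Spaths E w x0)
  (i j : 'I_n) (k : nat)
  (hpos : (0 < P [set om | x k om = Some i])%E) :
  ell E mu i j
    <= cond_prob P [set om | x k.+1 om = Some j] [set om | x k om = Some i]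
    <= emm E mu i j.
Proof.
have x_max := set_mem hx; have x_path := x_max.1.
have x_meas (m : nat) (a : 'I_n) : measurable [set om | x m om = Some a].
  exact: filtr_measurable w_meas (stoch_path_filtr _ x_path).
have xk_indep (p : pred 'I_h) :
    P ([set om | x k om = Some i] `&` w k @^-1` [set s | p s]) =
    (P [set om | x k om = Some i] * (\sum_(s | p s) mu s)%:E)%E.
  have [C ->] := stoch_path_history k (Some i) x_path.
  by rewrite history_indep // (measure_preimage_pred _ (w_meas k) (w_dist k)).
apply/andP; split.
- apply: le_cond_prob => //; rewrite -xk_indep setIC.
  apply: le_measure; rewrite ?inE; try by apply: measurableI.
  move=> om [/eqP Hij xi]; split => //.
  exact: maximal_path_forced_step x_max xi Hij.
- apply: cond_prob_le => //; rewrite -xk_indep.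
  apply: le_measure; rewrite ?inE; try by apply: measurableI.
  move=> om [xj xi]; split => //=.
  by case: x_path => _ _ x_feasible _; apply: x_feasible xi xj.
Qed.
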